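(* The set $\mathcal{SM}$ of strong minuscule elements of $W$ decomposes as the disjoint union \[\mathcal{SM}=\bigsqcup_{i\in K}\mathcal{SM}_i,\qquad \mathcal{SM}_i:=\{w\in\mathcal{SM}\mid \Lambda_w=\Lambda_i\}.\] In particular, for every strong minuscule $w$, $\Lambda_w$ is a fundamental weight $\Lambda_i$ with $i\in K$.
   Context: Let $\mathfrak g$ be a finite-dimensional simple Lie algebra over $\mathbb C$ of type $\mathrm A_n$, $\mathrm B_n$, $\mathrm C_n$ or $\mathrm D_n$, with index set $I=\{1,\dots,n\}$, simple roots $\alpha_i$, simple coroots $\alpha_i^\vee$, fundamental weights $\Lambda_i$, integral weights $P=\bigoplus_i\mathbb Z\Lambda_i$, dominant integral weights $P^+=\sum_i\mathbb Z_{\ge0}\Lambda_i$, and Weyl group $W$ generated by simple reflections $s_i$. The Dynkin diagrams are labeled as follows: type $\mathrm A_n$: chain $1-2-\cdots-n$; type $\mathrm B_n$: chain $1-2-\cdots-n$ with a double bond between $1$ and $2$, $\alpha_1$ short and $\alpha_2,\dots,\alpha_n$ long; type $\mathrm C_n$: chain $1-2-\cdots-n$ with a double bond between $1$ and $2$, $\alpha_1$ long and $\alpha_2,\dots,\alpha_n$ short; type $\mathrm D_n$: chain $n-(n-1)-\cdots-3$ with node $3$ joined to both nodes $1$ and $2$. Set $K=I$ in types $\mathrm A_n,\mathrm D_n$, $K=\{1\}$ in type $\mathrm B_n$, $K=I\setminus\{1\}$ in type $\mathrm C_n$. For $\Lambda\in P$, $w\in W$ is $\Lambda$-minuscule if there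 is a reduced expression $w=s_{i_1}\cdots s_{i_r}$ with $\langle s_{i_{p+1}}\cdots s_{i_r}(\Lambda),\alpha_{i_p}^\vee\rangle=1$ for all $1\le p\le r$; $w$ is dominant minuscule if it is $\Lambda$-minuscule for some $\Lambda\in P^+$. A dominant minuscule $w$ is strong minuscule if there is a unique $\Lambda\in P^+$, denoted $\Lambda_w$, such that $w$ is $\Lambda$-minuscule; $\mathcal{SM}$ denotes the set of strong minuscule elements. *)

From mathcomp Require Import all_boot all_order all_algebra.
Set Implicit Arguments. Unset Strict Implicit. Unset Printing Implicit Defensive.
Import GRing.Theory Num.Theory.
Local Open Scope ring_scope.

(* Node k of the paper (1 <= k <= n) is the ordinal
   k-1 : 'I_n.  Weights are written in the basis of fundamental weights:
   lam : {ffun 'I_n -> int} stands for sum_j lam j * Lambda_j, so that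
   <lam, alpha_j^vee> = lam j. *)
Inductive ctype := TA | TB | TC | TD.

Definition valid_rank (t : ctype) (n : nat) : bool :=
  match t with
  | TA => (1 <= n)%N
  | TB | TC => (2 <= n)%N
  | TD => (4 <= n)%N
  end.

(* cartan t a b = < alpha_a , alpha_b^vee >, for nodes a b numbered from 1. *)
Definition cartan (t : ctype) (a b : nat) : int :=
  if a == b then 2 else
  match t with
  | TA => if (a == b.+1) || (b == a.+1) then -1 else 0
  | TB => if (a == 2%N) && (b == 1%N) then -2
          else if (a == b.+1) || (b == a.+1) then -1 else 0
  | TC => if (a == 1%N) && (b == 2%N) then -2
          else if (a == b.+1) || (b == a.+1) then -1 else 0
  | TD => if [|| (a == 1%N) && (b == 3%N), (a == 3%N) && (b == 1%N),
               (a == 2%N) && (b == 3%N), (a == 3%N) && (b == 2%N),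
               (3 <= a)%N && (b == a.+1) | (3 <= b)%N && (a == b.+1)]
          then -1 else 0
  end.

Definition weight (n : nat) := {ffun 'I_n -> int}.

Definition fund (n : nat) (i : 'I_n) : weight n :=
  [ffun j => if j == i then 1 else 0].

Definition dominant (n : nat) (lam : weight n) : Prop := forall j, 0 <= lam j.

Definition sref (t : ctype) (n : nat) (i : 'I_n) (lam : weight n) : weight n :=
  [ffun j => lam j - lam i * cartan t i.+1 j.+1].

(* A word [:: i_1; ...; i_r] represents s_{i_1} ... s_{i_r}; its action on P. *)
Definition act (t : ctype) (n : nat) (w : seq 'I_n) (lam : weight n) : weight n :=
  foldr (@sref t n) lam w.

(* Elements of W are words modulo equality of their action on P
   (W acts faithfully on P). *)
Definition weq (t : ctype) (n : nat) (u v : seq 'I_n) : Prop :=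
  forall lam : weight n, act t u lam = act t v lam.

Definition reduced (t : ctype) (n : nat) (u : seq 'I_n) : Prop :=
  forall v, weq t v u -> (size u <= size v)%N.

Definition minuscule (t : ctype) (n : nat) (Lam : weight n) (w : seq 'I_n) : Prop :=
  exists u : seq 'I_n, [/\ weq t u w, reduced t u &
    forall p : nat, (1 <= p <= size u)%N -> forall i0 : 'I_n,
      (act t (drop p u) Lam) (nth i0 u p.-1) = 1].

Definition dominant_minuscule (t : ctype) (n : nat) (w : seq 'I_n) : Prop :=
  exists Lam : weight n, dominant Lam /\ minuscule t Lam w.

Definition strong_minuscule (t : ctype) (n : nat) (w : seq 'I_n) : Prop :=
  exists! Lam : weight n, dominant Lam /\ minuscule t Lam w.

Definition Kset (t : ctype) (n : nat) (i : 'I_n) : bool :=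
  match t with
  | TA | TD => true
  | TB => val i == 0%N
  | TC => val i != 0%N
  end.

From mathcomp Require Import all_boot all_order all_algebra zify.
Set Implicit Arguments. Unset Strict Implicit. Unset Printing Implicit Defensive.
Import GRing.Theory Num.Theory.
Local Open Scope ring_scope.

(* Let u be a reduced word witnessing that w is Lambda-minuscule.  Each
   reflection of u lowers the weight by exactly one simple root, so
   Lambda(b) - sum_y <alpha_y, alpha_b^vee> = 1 for every letter b, the sum
   running over the letters after the last occurrence of b in u.  Uniqueness of
   Lambda forces every node to occur in u (else Lambda + Lambda_j would work as
   well).  Rank the nodes by their last occurrence and orient each Dynkin edge
   from the earlier node to the later one: the identity says that every node
   has at most one incoming edge, and a node b with an incoming edge from a has
   Lambda(b) = 0 and <alpha_a, alpha_b^vee> = -1.  The Dynkin diagram is a tree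
   with n - 1 edges and the last letter r of u has no incoming edge, so every
   other node has exactly one; hence Lambda = Lambda_r.  Finally the double
   bond of B_n must point away from node 1 and that of C_n towards node 1,
   which puts r in K. *)

Lemma cartan_le0 t a b : a != b -> cartan t a b <= 0.
Proof.
by move=> /negbTE nab; rewrite /cartan nab; case: t; repeat case: ifP.
Qed.

(* Every classical Dynkin diagram is a tree whose edges are the pairs
   {k, dynkin_up t k} for k.+1 < n, with nodes numbered from 0. *)
Definition dynkin_up (t : ctype) (k : nat) : nat :=
  if t is TD then (if k is 0 then 2 else k.+1) else k.+1.

Lemma ltn_dynkin_up t k : (k < dynkin_up t k)%N.
Proof. by case: t; case: k. Qed.

Lemma dynkin_up_lt t n k :
  valid_rank t n -> (k.+1 < n)%N -> (dynkin_up t k < n)%N.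
Proof. by case: t; case: k => /= *; lia. Qed.

Lemma cartan_dynkin_up t k :
  cartan t k.+1 (dynkin_up t k).+1 < 0 /\ cartan t (dynkin_up t k).+1 k.+1 < 0.
Proof.
have ne1 : (k.+1 == (dynkin_up t k).+1) = false.
  by rewrite eqSS ltn_eqF // ltn_dynkin_up.
have ne2 : ((dynkin_up t k).+1 == k.+1) = false by rewrite eq_sym.
rewrite /cartan ne1 ne2; case: t {ne1 ne2} => /=; case: k => [|[|k]] //=.
all: by rewrite ?eqxx ?orbT.
Qed.

Lemma ler_sum_nonpos_uniq (T : eqType) (r s : seq T) (f : T -> int) :
  uniq s -> {subset s <= r} -> {in r, forall x, f x <= 0} ->
  \sum_(x <- r) f x <= \sum_(x <- s) f x.
Proof.
elim: r s => [|x r IHr] s us sr fr.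
  by case: s us sr => // y s _ /(_ y (mem_head _ _)).
have fr' : {in r, forall y, f y <= 0}.
  by move=> y yr; apply: fr; rewrite inE yr orbT.
rewrite big_cons; case: (boolP (x \in s)) => xs.
  rewrite (perm_big _ (perm_to_rem xs)) big_cons lerD2l.
  apply: IHr => //; first exact: rem_uniq.
  move=> y; rewrite mem_rem_uniq // => /andP[/= yx /sr].
  by rewrite inE (negbTE yx).
rewrite -[leRHS]add0r; apply: lerD; first exact/fr/mem_head.
apply: IHr => // y ys; move: (sr y ys); rewrite inE.
by case: eqP => [yx|//]; rewrite -yx ys in xs.
Qed.

Fixpoint minuscule_word t n (Lam : weight n) (u : seq 'I_n) : Prop :=
  if u is x :: u' then act t u' Lam x = 1 /\ minuscule_word t Lam u' else True.

Lemma minuscule_wordP t n (Lam : weight n) u :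
  minuscule_word t Lam u <->
  forall p, (1 <= p <= size u)%N ->
    forall i0, act t (drop p u) Lam (nth i0 u p.-1) = 1.
Proof.
elim: u => [|x u IHu] /=; first by split=> // _ [|p] /andP[].
rewrite IHu; split=> [[hx hu] [|[|p]] //= hp i0 | h]; first by rewrite drop0.
  exact: hu.
split=> [|[|p] // hp i0]; first by have := h 1%N isT x; rewrite /= drop0.
exact: h p.+2 hp i0.
Qed.

Lemma minusculeP t n (Lam : weight n) w :
  minuscule t Lam w <->
  exists u, [/\ weq t u w, reduced t u & minuscule_word t Lam u].
Proof.
by split=> -[u [wu ru hu]]; exists u; split=> //; apply/minuscule_wordP.
Qed.

Lemma act_minuscule_word t n (Lam : weight n) u : minuscule_word t Lam u ->
  forall j, act t u Lam j = Lam j - \sum_(y <- u) cartan t y.+1 j.+1.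
Proof.
elim: u => [_ j|x u IHu [hx /IHu{}IHu] j] /=; first by rewrite big_nil subr0.
by rewrite ffunE hx IHu big_cons mul1r opprD addrA addrAC.
Qed.

Lemma minuscule_word_catr t n (Lam : weight n) u v :
  minuscule_word t Lam (u ++ v) -> minuscule_word t Lam v.
Proof. by elim: u => //= x u IHu [_ /IHu]. Qed.

Lemma minuscule_word_last_occurrence t n (Lam : weight n) u b :
  minuscule_word t Lam u -> b \in u ->
  Lam b - \sum_(y <- take (index b (rev u)) (rev u)) cartan t y.+1 b.+1 = 1.
Proof.
move=> hu bu; set k := index b (rev u); set after := take k (rev u).
have kl : (k < size (rev u))%N by rewrite index_mem mem_rev.
have revuE : rev u = after ++ b :: drop k.+1 (rev u).
  by rewrite -{1}(cat_take_drop k (rev u)) (drop_nth b kl) nth_index ?mem_rev.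
have uE : u = rev (drop k.+1 (rev u)) ++ b :: rev after.
  by rewrite -cat_rcons -rev_cons -rev_cat -revuE revK.
move: hu; rewrite uE => /minuscule_word_catr /= [hb /act_minuscule_word hact].
by rewrite -[RHS]hb hact big_rev.
Qed.

Section Orientation.

Variables (t : ctype) (n : nat) (L : weight n) (rank : 'I_n -> nat).
Hypothesis L_ge0 : dominant L.
Hypothesis earlier_sum_le1 : forall b (s : seq 'I_n),
  uniq s -> {in s, forall a, (rank a < rank b)%N} ->
  L b - \sum_(a <- s) cartan t a.+1 b.+1 <= 1.

Lemma earlier_neighbor_simple a b :
  (rank a < rank b)%N -> cartan t a.+1 b.+1 < 0 ->
  L b = 0 /\ cartan t a.+1 b.+1 = -1.
Proof.
move=> ab cab.
have : L b - \sum_(x <- [:: a]) cartan t x.+1 b.+1 <= 1.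
  by apply: earlier_sum_le1 => // x /[!inE] /eqP->.
rewrite big_seq1; have := L_ge0 b; lia.
Qed.

Lemma earlier_neighbor_unique a c b :
  (rank a < rank b)%N -> (rank c < rank b)%N ->
  cartan t a.+1 b.+1 < 0 -> cartan t c.+1 b.+1 < 0 -> a = c.
Proof.
move=> ab cb cab ccb; apply/eqP/negPn/negP => ac.
have : L b - \sum_(x <- [:: a; c]) cartan t x.+1 b.+1 <= 1.
  apply: earlier_sum_le1; first by rewrite /= inE ac.
  by move=> x /[!inE] /orP[] /eqP->.
rewrite big_cons big_seq1; have := L_ge0 b; lia.
Qed.

Hypothesis rank_inj : injective rank.
Variable r : 'I_n.
Hypothesis rank_root : rank r = 0%N.

Lemma root_first x : x != r -> (rank r < rank x)%N.
Proof.
move=> xr; rewrite rank_root lt0n; apply: contra xr => /eqP x0.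
by apply/eqP/rank_inj; rewrite x0 rank_root.
Qed.

Hypothesis rank_valid : valid_rank t n.

(* Map each Dynkin edge to its later endpoint: this is injective since no
   node has two incoming edges, it misses r, and there are n - 1 edges. *)
Lemma earlier_neighbor_exists b : b != r ->
  exists2 a, (rank a < rank b)%N & cartan t a.+1 b.+1 < 0.
Proof.
move=> br.
pose lo (k : 'I_n.-1) : 'I_n := widen_ord (leq_pred n) k.
pose hi (k : 'I_n.-1) : 'I_n := insubd r (dynkin_up t k).
have hiE (k : 'I_n.-1) : val (hi k) = dynkin_up t k.
  by rewrite val_insubd dynkin_up_lt //; have := ltn_ord k; lia.
pose late k := if (rank (lo k) < rank (hi k))%N then hi k else lo k.
pose early k := if (rank (lo k) < rank (hi k))%N then lo k else hi k.
have edge k : (rank (early k) < rank (late k))%N /\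
              cartan t (early k).+1 (late k).+1 < 0.
  have [c1 c2] := cartan_dynkin_up t k; rewrite -hiE in c1 c2.
  rewrite /early /late; case: (ltnP (rank (lo k)) (rank (hi k))) => // hl.
  split=> //; rewrite ltn_neqAle hl andbT.
  apply: contraTneq (ltn_dynkin_up t k) => /rank_inj/(congr1 val).
  by rewrite hiE /= => ->; rewrite ltnn.
have late_inj : injective late.
  move=> k k' e; have [ek ck] := edge k; have [ek' ck'] := edge k'.
  rewrite -e in ek' ck'; have := earlier_neighbor_unique ek ek' ck ck'.
  move: e; rewrite /early /late.
  have := ltn_dynkin_up t k; have := ltn_dynkin_up t k'.
  case: ifP => _; case: ifP => _ up' up /(congr1 val) e /(congr1 val) e';
    apply: val_inj; move: e e'; rewrite /= ?hiE; lia.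
have late_neq_root k : late k != r.
  by apply: contraTneq (proj1 (edge k)) => ->; rewrite rank_root.
have : late @: setT = [set~ r].
  apply/setP/subset_cardP.
    by rewrite card_imset // cardsT cardsC1 !card_ord.
  by apply/subsetP=> _ /imsetP[k _ ->]; rewrite !inE.
move=> /setP/(_ b); rewrite !inE br => /imsetP[k _ ->].
by exists (early k); case: (edge k).
Qed.

Lemma weight_eq_fund_root : L r = 1 -> L = fund r.
Proof.
move=> L_root; apply/ffunP => x; rewrite ffunE.
case: eqVneq => [->|xr]; first exact: L_root.
by have [a ax /(earlier_neighbor_simple ax) []] := earlier_neighbor_exists xr.
Qed.

Lemma root_in_K : Kset t r.
Proof.
rewrite /Kset; case E : t rank_valid => //= n2.
- apply/negPn/negP => r0; have n0 : (0 < n)%N by lia.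
  have first_r : Ordinal n0 != r by apply: contraNneq r0 => <-.
  have [a ab cab] := earlier_neighbor_exists first_r.
  have [_] := earlier_neighbor_simple ab cab; rewrite E.
  by case: (nat_of_ord a) => [|[|m]] /eqP.
- apply/negP => r0; have n1 : (1 < n)%N by lia.
  have second_r : Ordinal n1 != r by apply: contraTneq r0 => <-.
  have c12 : cartan t r.+1 (Ordinal n1).+1 = -2 by rewrite E (eqP r0).
  have c12_lt0 : cartan t r.+1 (Ordinal n1).+1 < 0 by rewrite c12.
  have [_] := earlier_neighbor_simple (root_first second_r) c12_lt0.
  by rewrite c12.
Qed.

End Orientation.

Lemma fund_inj n : injective (@fund n).
Proof.
move=> i j /(congr1 (fun lam : weight n => lam i)); rewrite !ffunE eqxx.
by case: eqP => // _ /eqP.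
Qed.

Lemma act_add_fund t n (lam : weight n) u j :
  j \notin u -> act t u (lam + fund j) = act t u lam + fund j.
Proof.
elim: u => //= x u IHu; rewrite inE negb_or => /andP[jx ju].
rewrite IHu //; apply/ffunP => k.
by rewrite !ffunE [x == j]eq_sym (negbTE jx) addr0 addrAC.
Qed.

Lemma minuscule_word_add_fund t n (Lam : weight n) u j :
  j \notin u -> minuscule_word t Lam u -> minuscule_word t (Lam + fund j) u.
Proof.
elim: u => //= x u IHu; rewrite inE negb_or => /andP[jx ju] [hx hu].
split; last exact: IHu.
by rewrite act_add_fund // !ffunE hx [x == j]eq_sym (negbTE jx) addr0.
Qed.

Lemma strong_minuscule_word_full t n w (Lam : weight n) u :
  strong_minuscule t w -> dominant Lam ->
  weq t u w -> reduced t u -> minuscule_word t Lam u -> forall j, j \in u.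
Proof.
move=> [L0 [_ L0_uniq]] dLam wu ru hu j; apply/negPn/negP => ju.
have dLamj : dominant (Lam + fund j).
  by move=> k; rewrite !ffunE addr_ge0 //; case: eqP.
have mLamj : minuscule t (Lam + fund j) w.
  by apply/minusculeP; exists u; split=> //; apply: minuscule_word_add_fund.
have mLam : minuscule t Lam w by apply/minusculeP; exists u.
have := esym (L0_uniq _ (conj dLamj mLamj)).
rewrite (L0_uniq _ (conj dLam mLam)).
move/(congr1 (fun lam : weight n => lam j)); rewrite !ffunE eqxx.
by rewrite -[RHS]addr0 => /addrI /eqP.
Qed.

Lemma minuscule_word_full_fund t n (Lam : weight n) u :
  valid_rank t n -> dominant Lam -> minuscule_word t Lam u ->
  (forall j, j \in u) -> exists2 r, Kset t r & Lam = fund r.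
Proof.
move=> tn dLam hu full.
pose rank x := index x (rev u).
have rank_inj : injective rank.
  by move=> x y; apply: (index_inj x); rewrite mem_rev.
have n0 : (0 < n)%N by move: tn; case: (t) => /=; lia.
case E : (rev u) => [|r rest].
  by have := full (Ordinal n0); rewrite -mem_rev E.
have rank_root : rank r = 0%N by rewrite /rank E /= eqxx.
have last_occ b := minuscule_word_last_occurrence hu (full b).
have L_root : Lam r = 1.
  by have := last_occ r; rewrite -/(rank r) rank_root take0 big_nil subr0.
have earlier b s : uniq s -> {in s, forall a, (rank a < rank b)%N} ->
    Lam b - \sum_(a <- s) cartan t a.+1 b.+1 <= 1.
  move=> us sb; rewrite -(last_occ b) lerD2l lerN2.
  have in_after y : (y \in take (rank b) (rev u)) = (rank y < rank b)%N.
    by rewrite in_take // mem_rev.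
  apply: ler_sum_nonpos_uniq => // [a /sb|y]; rewrite in_after // => yb.
  apply: cartan_le0; rewrite eqSS; apply: contraTneq yb => /val_inj->.
  by rewrite ltnn.
exists r.
- exact: (root_in_K dLam earlier rank_inj rank_root tn).
- exact: (weight_eq_fund_root dLam earlier rank_inj rank_root tn L_root).
Qed.

Theorem corollary6p4 (t : ctype) (n : nat) (hn : valid_rank t n)
    (w : seq 'I_n) (Lam : weight n) :
  strong_minuscule t w -> dominant Lam -> minuscule t Lam w ->
  exists! i : 'I_n, Kset t i /\ Lam = fund i.
Proof.
move=> smw dLam /minusculeP[u [wu ru hu]].
have full := strong_minuscule_word_full smw dLam wu ru hu.
have [r Kr ->] := minuscule_word_full_fund hn dLam hu full.
by exists r; split=> // i [_ /fund_inj].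
Qed.
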